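(* Let $G$ be a connected graph with $\hat\delta$-thin triangles, let $u,v$ be arbitrary vertices and $\lambda$ a fixed real number. Then there exists a ball $B$ of radius $2\hat\delta$ such that for every pair of vertices $x,y$ with $d(x,u)<\lambda\,d(u,v)$ and $d(y,v)<(1-\lambda)\,d(u,v)$, every shortest path from $x$ to $y$ intersects $B$.
   Context: $G$ is regarded as a geodesic metric space (each edge an interval of length 1), with distance $d$. For vertices $a,b,c$ let $(b.c)_a=\tfrac12(d(a,b)+d(a,c)-d(b,c))$. $G$ has $\hat\delta$-thin triangles if for every triple of vertices $x_1,x_2,x_3$ and every choice of shortest paths $p_{i,j}$ between $x_i$ and $x_j$, for every $i$ with $\{j,\ell\}$ the other two indices and every $k$ with $1\le k\le (x_j.x_\ell)_{x_i}$, the points $y_k\in p_{i,j}$ and $y'_k\in p_{i,\ell}$ at distance $k$ from $x_i$ satisfy $d(y_k,y'_k)\le\hat\delta$. *)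

From Stdlib Require Import Reals List ClassicalEpsilon.
Import ListNotations.
Open Scope R_scope.

Section Graph.
Context {V : Type} (adj : V -> V -> Prop).

Fixpoint chain (x : V) (l : list V) : Prop :=
  match l with
  | [] => True
  | y :: l' => adj x y /\ chain y l'
  end.

(* the walk x :: l goes from x to y; its length (number of edges) is length l *)
Definition walk (x y : V) (l : list V) : Prop :=
  chain x l /\ last (x :: l) x = y.

Definition connected : Prop := forall x y : V, exists l, walk x y l.

Definition is_dist (x y : V) (n : nat) : Prop :=
  (exists l, walk x y l /\ length l = n) /\
  (forall l, walk x y l -> (n <= length l)%nat).

(* graph distance d(x,y) (meaningful when the graph is connected) *)
Definition gdist (x y : V) : nat :=
  epsilon (inhabits 0%nat) (fun n => is_dist x y n).

Definition geodesic (x y : V) (l : list V) : Prop :=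
  walk x y l /\ length l = gdist x y.

Definition gromov (a b c : V) : R :=
  (INR (gdist a b) + INR (gdist a c) - INR (gdist b c)) / 2.

(* hat-delta-thin triangles: for every triple x, y, z and shortest paths p from
   x to y and q from x to z, for every integer 1 <= k <= (y.z)_x the vertices of
   p and q at distance k from x are at distance <= delta. (Quantifying over all
   triples and all geodesics issued from the first vertex covers every index i
   and every choice of the paths p_{i,j}.) *)
Definition thin_triangles (delta : R) : Prop :=
  forall (x y z : V) (p q : list V),
    geodesic x y p -> geodesic x z q ->
    forall k : nat, (1 <= k)%nat -> INR k <= gromov x y z ->
      INR (gdist (nth k (x :: p) x) (nth k (x :: q) x)) <= delta.

End Graph.

(* Let [D = d(u,v)], fix a geodesic from [u] to [v] and let [c] be its vertex at the
   largest integer distance [k < lambda D] from [u] (if [lambda D <= 0] the statement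
   is vacuous).  Given [x], [y] as in the statement, [d(u,x) <= k < d(u,y)], so the
   Gromov product [(v.y)_u] is at least [k]: on a geodesic from [u] to [y], the vertex
   [p] at distance [k] from [u] is [delta]-close to [c].  In the triangle [y, u, x] the
   product [(u.x)_y] is at least [d(u,y) - k], which is the distance from [y] to [p];
   so [p] is [delta]-close to a vertex of any geodesic from [x] to [y]. *)
From Stdlib Require Import Reals List Arith Lia Lra Classical ClassicalEpsilon.
Import ListNotations.
Open Scope R_scope.

Lemma exists_least_nat (P : nat -> Prop) (n : nat) :
  P n -> exists m, P m /\ forall k, P k -> (m <= k)%nat.
Proof.
  induction n as [n IH] using lt_wf_ind; intros Pn.
  destruct (classic (exists k, (k < n)%nat /\ P k)) as [[k [Hkn Pk]] | Hnone].
  - exact (IH k Hkn Pk).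
  - exists n; split; [exact Pn |].
    intros k Pk; destruct (le_lt_dec n k); [assumption |].
    exfalso; apply Hnone; eauto.
Qed.

Lemma greatest_nat_lt (r : R) :
  0 < r -> exists k : nat, INR k < r /\ forall n, INR n < r -> (n <= k)%nat.
Proof.
  intros Hr; destruct (INR_unbounded r) as [N HN].
  destruct (exists_least_nat (fun n => r <= INR n) N) as [[|k] [Hk Hleast]]; [lra | simpl in Hk; lra |].
  exists k; split.
  - destruct (Rlt_le_dec (INR k) r) as [Hlt | Hge]; [exact Hlt |].
    specialize (Hleast k Hge); lia.
  - intros n Hn; destruct (le_lt_dec (S k) n) as [Hle | Hlt]; [| lia].
    apply le_INR in Hle; lra.
Qed.

Section Walks.
Context {V : Type} (adj : V -> V -> Prop).

Lemma last_cons_default (a : V) (t : list V) (d d' : V) :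
  last (a :: t) d = last (a :: t) d'.
Proof. revert a; induction t as [|b t IH]; intros a; [reflexivity | apply (IH b)]. Qed.

Lemma walk_cons x a y t : adj x a -> walk adj a y t -> walk adj x y (a :: t).
Proof.
  intros Hxa [Hchain Hlast]; split; [split; assumption |].
  change (last (a :: t) x = y); rewrite <- Hlast; apply last_cons_default.
Qed.

Lemma walk_uncons x a y t : walk adj x y (a :: t) -> adj x a /\ walk adj a y t.
Proof.
  intros [[Hxa Hchain] Hlast]; split; [exact Hxa | split; [exact Hchain |]].
  change (last (a :: t) x = y) in Hlast; rewrite <- Hlast; apply last_cons_default.
Qed.

Lemma walk_cat x y z l1 l2 :
  walk adj x y l1 -> walk adj y z l2 -> walk adj x z (l1 ++ l2).
Proof.
  revert x; induction l1 as [|a t IH]; intros x H1 H2.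
  - destruct H1 as [_ Hlast]; simpl in Hlast; subst; exact H2.
  - apply walk_uncons in H1 as [Hxa H1]; apply walk_cons; auto.
Qed.

Lemma walk_rev (adj_sym : forall a b, adj a b -> adj b a) x y l :
  walk adj x y l -> exists r, walk adj y x r /\ y :: r = rev (x :: l).
Proof.
  revert x; induction l as [|a t IH]; intros x Hw.
  - destruct Hw as [_ Hlast]; simpl in Hlast; subst.
    exists []; split; [split; simpl; auto | reflexivity].
  - apply walk_uncons in Hw as [Hxa Hw].
    destruct (IH a Hw) as [r [Hr Hrev]].
    exists (r ++ [x]); split.
    + apply walk_cat with a; [exact Hr | split; simpl; auto].
    + change (rev (x :: a :: t)) with (rev (a :: t) ++ [x]); rewrite <- Hrev; reflexivity.
Qed.

Lemma last_In (x : V) (l : list V) : In (last (x :: l) x) (x :: l).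
Proof.
  revert x; induction l as [|a t IH]; intros x; [left; reflexivity |].
  right; change (In (last (a :: t) x) (a :: t)).
  rewrite (last_cons_default a t x a); apply IH.
Qed.

End Walks.

Section GraphMetric.
Context {V : Type} (adj : V -> V -> Prop)
  (adj_sym : forall a b, adj a b -> adj b a)
  (Hconn : connected adj).

Lemma gdist_spec x y : is_dist adj x y (gdist adj x y).
Proof.
  unfold gdist; apply epsilon_spec.
  destruct (Hconn x y) as [l Hl].
  destruct (exists_least_nat (fun n => exists l, walk adj x y l /\ length l = n) (length l))
    as [m [Hm Hleast]]; [eauto |].
  exists m; split; [exact Hm |].
  intros l' Hl'; apply Hleast; eauto.
Qed.

Lemma geodesic_exists x y : exists l, geodesic adj x y l.
Proof. destruct (gdist_spec x y) as [[l [Hw Hlen]] _]; exists l; split; assumption. Qed.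

Lemma gdist_le_walk x y l : walk adj x y l -> (gdist adj x y <= length l)%nat.
Proof. apply (proj2 (gdist_spec x y)). Qed.

Lemma gdist_refl x : gdist adj x x = 0%nat.
Proof. pose proof (gdist_le_walk x x [] (conj I eq_refl)); simpl in *; lia. Qed.

Lemma gdist_triangle x y z : (gdist adj x z <= gdist adj x y + gdist adj y z)%nat.
Proof.
  destruct (geodesic_exists x y) as [l1 [Hw1 Hlen1]].
  destruct (geodesic_exists y z) as [l2 [Hw2 Hlen2]].
  rewrite <- Hlen1, <- Hlen2, <- length_app.
  apply gdist_le_walk, walk_cat with y; assumption.
Qed.

Lemma gdist_sym x y : gdist adj x y = gdist adj y x.
Proof.
  assert (Hle : forall a b, (gdist adj a b <= gdist adj b a)%nat).
  { intros a b; destruct (geodesic_exists b a) as [l [Hw Hlen]].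
    destruct (walk_rev adj adj_sym _ _ _ Hw) as [r [Hr Hrev]].
    assert (Hlen' : length (a :: r) = length (b :: l)) by (rewrite Hrev; apply length_rev).
    simpl in Hlen'; rewrite <- Hlen; injection Hlen' as <-; apply gdist_le_walk, Hr. }
  apply Nat.le_antisymm; apply Hle.
Qed.

Lemma geodesic_rev x y l :
  geodesic adj x y l -> exists r, geodesic adj y x r /\ y :: r = rev (x :: l).
Proof.
  intros [Hw Hlen]; destruct (walk_rev adj adj_sym _ _ _ Hw) as [r [Hr Hrev]].
  exists r; split; [split; [exact Hr |] | exact Hrev].
  assert (Hlen' : length (y :: r) = length (x :: l)) by (rewrite Hrev; apply length_rev).
  simpl in Hlen'; rewrite gdist_sym; lia.
Qed.

Lemma nth_rev_geodesic x y l r m :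
  geodesic adj x y l -> y :: r = rev (x :: l) -> (m <= gdist adj x y)%nat ->
  nth m (y :: r) y = nth (gdist adj x y - m) (x :: l) x.
Proof.
  intros [_ Hlen] Hrev Hm; rewrite Hrev, rev_nth by (simpl; lia).
  simpl length; replace (S (length l) - S m)%nat with (gdist adj x y - m)%nat by lia.
  apply nth_indep; simpl; lia.
Qed.

Variable delta : R.
Hypothesis Hthin : thin_triangles adj delta.

Lemma thin_geodesics_le x y z p q k :
  0 <= delta -> geodesic adj x y p -> geodesic adj x z q -> INR k <= gromov adj x y z ->
  INR (gdist adj (nth k (x :: p) x) (nth k (x :: q) x)) <= delta.
Proof.
  intros Hdelta Hp Hq Hk; destruct k as [|k].
  - simpl nth; rewrite gdist_refl; simpl; lra.
  - apply (Hthin x y z p q); [assumption | assumption | lia | assumption].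
Qed.

(* The thin-triangle condition for the triangle [y, u, x], read from [y] along the
   reversed geodesics. *)
Lemma geodesic_vertex_near_geodesic u x y pu l k :
  geodesic adj u y pu -> geodesic adj x y l ->
  (gdist adj u x <= k < gdist adj u y)%nat ->
  exists w, In w (x :: l) /\ INR (gdist adj (nth k (u :: pu) u) w) <= delta.
Proof.
  intros Hpu Hl Hk.
  destruct (geodesic_rev _ _ _ Hpu) as [ru [Hru Hrev_u]].
  destruct (geodesic_rev _ _ _ Hl) as [rl [Hrl Hrev_l]].
  set (m := (gdist adj u y - k)%nat).
  pose proof (gdist_triangle u x y) as Htri.
  assert (Hgromov : INR m <= gromov adj y u x).
  { unfold gromov, m; rewrite minus_INR by lia.
    rewrite (gdist_sym y u), (gdist_sym y x).
    apply le_INR in Htri; rewrite plus_INR in Htri.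
    destruct Hk as [Hux _]; apply le_INR in Hux; lra. }
  pose proof (Hthin y u x ru rl Hru Hrl m ltac:(unfold m; lia) Hgromov) as Hclose.
  rewrite (nth_rev_geodesic u y pu ru m Hpu Hrev_u) in Hclose by (unfold m; lia).
  replace (gdist adj u y - m)%nat with k in Hclose by (unfold m; lia).
  exists (nth m (y :: rl) y); split; [| exact Hclose].
  apply (in_rev (x :: l)); rewrite <- Hrev_l; apply nth_In.
  destruct Hrl as [_ Hlen]; rewrite gdist_sym in Hlen; simpl; unfold m; lia.
Qed.

End GraphMetric.

Theorem mainTheorem8 (V : Type) (adj : V -> V -> Prop)
  (adj_sym : forall a b, adj a b -> adj b a)
  (adj_irrefl : forall a, ~ adj a a)
  (Hconn : connected adj)
  (delta : R) (Hthin : thin_triangles adj delta)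
  (u v : V) (lambda : R) :
  exists c : V,
    forall x y : V,
      INR (gdist adj x u) < lambda * INR (gdist adj u v) ->
      INR (gdist adj y v) < (1 - lambda) * INR (gdist adj u v) ->
      forall l : list V, geodesic adj x y l ->
        exists w, In w (x :: l) /\ INR (gdist adj c w) <= 2 * delta.
Proof.
  destruct (geodesic_exists adj Hconn u v) as [pv Hpv].
  destruct (Rlt_le_dec 0 (lambda * INR (gdist adj u v))) as [Hpos | Hnonpos]; cycle 1.
  { exists u; intros x y Hx; pose proof (pos_INR (gdist adj x u)); lra. }
  destruct (greatest_nat_lt _ Hpos) as [k [Hk Hgreatest]].
  exists (nth k (u :: pv) u); intros x y Hx Hy l Hl.
  destruct (geodesic_exists adj Hconn u y) as [pu Hpu].
  pose proof (gdist_triangle adj Hconn u y v) as Htri.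
  apply le_INR in Htri; rewrite plus_INR in Htri.
  assert (Hux : (gdist adj u x <= k)%nat)
    by (rewrite (gdist_sym adj adj_sym Hconn); apply Hgreatest, Hx).
  assert (Huy : (k < gdist adj u y)%nat) by (apply INR_lt; lra).
  destruct (geodesic_vertex_near_geodesic adj adj_sym Hconn delta Hthin u x y pu l k
              Hpu Hl (conj Hux Huy)) as [w [Hw Hpw]].
  exists w; split; [exact Hw |].
  assert (Hcp : INR (gdist adj (nth k (u :: pv) u) (nth k (u :: pu) u)) <= delta).
  { apply (thin_geodesics_le adj Hconn delta Hthin u v y); try assumption.
    - (* [0 <= delta] is read off the bound [Hpw]. *)
      pose proof (pos_INR (gdist adj (nth k (u :: pu) u) w)); lra.
    - unfold gromov; rewrite (gdist_sym adj adj_sym Hconn v y); lra. }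
  pose proof (gdist_triangle adj Hconn (nth k (u :: pv) u) (nth k (u :: pu) u) w) as Hcw.
  apply le_INR in Hcw; rewrite plus_INR in Hcw; lra.
Qed.
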